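(* If $n=p^s$ with $p$ prime and $s\ge 1$ an integer, then the $n\times n$ square has no perfect Mondrian partition.
   Context: A Mondrian partition of an $n\times n$ square ($n$ a positive integer) is a dissection of the square into $k\ge 2$ non-overlapping rectangles with positive integer side lengths which are pairwise non-congruent (rectangles of dimensions $a\times b$ and $b\times a$ count as congruent). It is perfect if all its rectangles have the same area. *)

From mathcomp Require Import all_boot.
Set Implicit Arguments. Unset Strict Implicit. Unset Printing Implicit Defensive.

(* An axis-parallel rectangle placed in the plane: lower-left corner
   (rx, ry), width rw and height rh.  Corners lie on the integer grid. *)
Record rect := Rect { rx : nat; ry : nat; rw : nat; rh : nat }.

(* The unit cell [i,i+1] x [j,j+1] lies in the rectangle r. *)
Definition cell_in (r : rect) (i j : nat) : bool :=
  (rx r <= i < rx r + rw r) && (ry r <= j < ry r + rh r).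

Definition area (r : rect) : nat := rw r * rh r.

Definition congruent (r1 r2 : rect) : Prop :=
  (rw r1 = rw r2 /\ rh r1 = rh r2) \/ (rw r1 = rh r2 /\ rh r1 = rw r2).

(* R : 'I_k -> rect is a Mondrian partition of the n x n square
   [0,n] x [0,n]: k >= 2 rectangles with positive integer sides, contained
   in the square, non-overlapping and covering it (every unit cell of the
   square lies in exactly one rectangle), pairwise non-congruent. *)
Definition mondrian_partition (n k : nat) (R : 'I_k -> rect) : Prop :=
  [/\ 2 <= k,
      (forall t, 0 < rw (R t) /\ 0 < rh (R t)),
      (forall t, rx (R t) + rw (R t) <= n /\ ry (R t) + rh (R t) <= n),
      (forall i j, i < n -> j < n -> exists! t, cell_in (R t) i j)
    & (forall t1 t2, t1 <> t2 -> ~ congruent (R t1) (R t2))].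

Definition perfect_mondrian_partition (n k : nat) (R : 'I_k -> rect) : Prop :=
  mondrian_partition n R /\ (forall t1 t2, area (R t1) = area (R t2)).

From mathcomp Require Import all_boot.
From mathcomp Require Import zify.

(* Counting unit cells, the areas of the k rectangles of a partition of the
   n x n square add up to n^2.  If all k areas equal A, then k * A = p^(2s),
   so A = p^t and k = p^m with m = 2s - t.  Every rectangle of area p^t is
   then a p^e x p^(t-e) rectangle, and since it fits in the square both
   exponents are at most s.  Up to congruence such a rectangle is determined
   by its shorter exponent min(e, t-e), which lies in [t-s, t/2]: at most
   m/2 + 1 values.  Pairwise non-congruence thus gives k <= m/2 + 1, while
   k = p^m >= 2 forces m >= 1 and p^m > m >= m/2 + 1, a contradiction. *)

Lemma count_interval (n a w : nat) :
  \sum_(i < n) ((a <= i) && (i < a + w) : nat) = minn n (a + w) - minn n a.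
Proof.
elim: n => [|n IH]; first by rewrite big_ord0; lia.
rewrite big_ord_recr /= IH.
by case: (leqP a n) => ?; case: (ltnP n (a + w)) => ? /=; lia.
Qed.

Lemma area_cell_count {n : nat} {r : rect} :
  rx r + rw r <= n -> ry r + rh r <= n ->
  area r = \sum_(i < n) \sum_(j < n) (cell_in r i j : nat).
Proof.
move=> fit_x fit_y; rewrite /area /cell_in.
under eq_bigr => i _ do under eq_bigr => j _ do rewrite -mulnb.
under eq_bigr => i _ do rewrite -big_distrr /=.
by rewrite -big_distrl /= !count_interval; congr (_ * _); lia.
Qed.

Lemma sum_unique_true {k : nat} {P : 'I_k -> bool} :
  (exists! t, P t) -> \sum_(t < k) (P t : nat) = 1.
Proof.
case=> t0 [Pt0 t0_unique]; rewrite (bigD1 t0) //= Pt0 big1 // => t t_neq.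
case Pt: (P t) => //; by rewrite (t0_unique t Pt) eqxx in t_neq.
Qed.

Lemma partition_area_sum {n k : nat} {R : 'I_k -> rect} :
  (forall t, rx (R t) + rw (R t) <= n /\ ry (R t) + rh (R t) <= n) ->
  (forall i j, i < n -> j < n -> exists! t, cell_in (R t) i j) ->
  \sum_(t < k) area (R t) = n * n.
Proof.
move=> fit cover.
under eq_bigr => t _ do rewrite (area_cell_count (fit t).1 (fit t).2).
rewrite exchange_big /=; under eq_bigr => i _ do rewrite exchange_big /=.
under eq_bigr => i _ do under eq_bigr => j _
  do rewrite (sum_unique_true (cover i j (ltn_ord i) (ltn_ord j))).
under eq_bigr => i _ do rewrite sum_nat_const card_ord muln1.
by rewrite sum_nat_const card_ord.
Qed.

Lemma prime_power_factors {p t a b : nat} :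
  prime p -> a * b = p ^ t -> exists2 e, e <= t & a = p ^ e /\ b = p ^ (t - e).
Proof.
move=> p_prime ab_eq.
have : a %| p ^ t by rewrite -ab_eq dvdn_mulr.
case/(dvdn_pfactor _ _ p_prime) => e le_et a_eq; exists e => //; split => //.
have pe_gt0 : 0 < p ^ e by rewrite expn_gt0 prime_gt0.
by apply/eqP; rewrite -(eqn_pmul2l pe_gt0) -a_eq ab_eq a_eq -expnD subnKC.
Qed.

Lemma half_succ_lt_pow {p m : nat} :
  1 < p -> 2 <= p ^ m -> m./2.+1 < p ^ m.
Proof.
move=> p_gt1; case: m => [|m _]; first by rewrite expn0.
by apply: leq_ltn_trans (ltn_expl m.+1 p_gt1); lia.
Qed.

Section PerfectPrimePowerSquare.

Context {p s k : nat} {R : 'I_k -> rect}.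
Hypothesis p_prime : prime p.
Hypothesis R_perfect : perfect_mondrian_partition (p ^ s) R.

Let p_gt1 : 1 < p. Proof. exact: prime_gt1. Qed.

Lemma common_area_exponent :
  exists2 t, (forall u, area (R u) = p ^ t) & k = p ^ (2 * s - t).
Proof.
have [[k_ge2 _ fit cover _] same_area] := R_perfect.
have k_gt0 : 0 < k by lia.
set A := area (R (Ordinal k_gt0)).
have Ak_eq : A * k = p ^ (2 * s).
  rewrite mulnC mul2n -addnn expnD -(partition_area_sum fit cover).
  rewrite -{1}(card_ord k) -sum_nat_const.
  by apply: eq_bigr => u _; apply: same_area.
have [t _ [A_eq k_eq]] := prime_power_factors p_prime Ak_eq.
by exists t => // u; rewrite -A_eq; apply: same_area.
Qed.

Section CommonArea.

Context {t : nat}.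
Hypothesis area_pow : forall u, area (R u) = p ^ t.

Let wexp (u : 'I_k) : nat := logn p (rw (R u)).

Lemma piece_exponents (u : 'I_k) :
  [/\ rw (R u) = p ^ wexp u, rh (R u) = p ^ (t - wexp u),
      wexp u <= t, wexp u <= s & t - wexp u <= s].
Proof.
have [[_ _ fit _ _] _] := R_perfect.
have [e le_et [w_eq h_eq]] := prime_power_factors p_prime (area_pow u).
have -> : wexp u = e by rewrite /wexp w_eq pfactorK.
have [fit_x fit_y] := fit u.
split => //; rewrite -(leq_exp2l _ _ p_gt1) -?w_eq -?h_eq; lia.
Qed.

(* Up to congruence a piece is determined by its shorter exponent, which lies
   in [t - s, t/2]; shifting it gives a shape index below (2s - t)/2 + 1. *)
Let shape (u : 'I_k) : nat := minn (wexp u) (t - wexp u) - (t - s).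

Lemma shape_bound (u : 'I_k) : shape u < (2 * s - t)./2.+1.
Proof. by have [_ _ le_et le_es le_tes] := piece_exponents u; rewrite /shape; lia. Qed.

(* Pieces with the same shape index are congruent, hence equal. *)
Lemma shape_inj : injective (fun u => Ordinal (shape_bound u)).
Proof.
move=> u1 u2 /(congr1 val) /= same_shape.
have [[_ _ _ _ u_distinct] _] := R_perfect.
have [// | /eqP u_neq] := eqVneq u1 u2; exfalso; apply: (u_distinct _ _ u_neq).
have [w1 h1 le1 l1 r1] := piece_exponents u1.
have [w2 h2 le2 l2 r2] := piece_exponents u2.
rewrite /congruent w1 h1 w2 h2; move: same_shape; rewrite /shape => same_shape.
have [e_eq | e_eq] : wexp u1 = wexp u2 \/ wexp u1 = t - wexp u2 by lia.
- by left; rewrite e_eq.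
- by right; rewrite e_eq; split => //; congr (_ ^ _); lia.
Qed.

Lemma piece_count_bound : k <= (2 * s - t)./2.+1.
Proof. by have := leq_card _ shape_inj; rewrite !card_ord. Qed.

End CommonArea.

End PerfectPrimePowerSquare.

Theorem mainTheorem7 (p s : nat) :
  prime p -> 1 <= s ->
  ~ (exists (k : nat) (R : 'I_k -> rect), perfect_mondrian_partition (p ^ s) R).
Proof.
move=> p_prime _ [k [R R_perfect]].
have [t area_pow k_eq] := common_area_exponent p_prime R_perfect.
have [[k_ge2 _ _ _ _] _] := R_perfect.
have := piece_count_bound p_prime R_perfect area_pow.
rewrite k_eq in k_ge2 *; rewrite leqNgt.
by rewrite (half_succ_lt_pow (prime_gt1 p_prime) k_ge2).
Qed.
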